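(* Let $m$ be a positive integer and let $D$ be a quaternary near-extremal Hermitian self-dual code of length $6m$. Let $A_{2m}$ denote the number of codewords of weight $2m$ in $D$. Then $A_{2m}\equiv 0 \pmod 9$.
   Context: Let $\mathbb{F}_4=\{0,1,\omega,\omega^2\}$ with $\omega^2=\omega+1$. A quaternary code of length $n$ is a linear subspace of $\mathbb{F}_4^n$; with $\langle x,y\rangle_H=\sum_{k} x_k y_k^2$, the Hermitian dual is $D^{\perp_H}=\{x : \langle x,y\rangle_H=0\ \forall y\in D\}$ and $D$ is Hermitian self-dual if $D=D^{\perp_H}$. The weight of a vector is the number of its nonzero coordinates. A quaternary Hermitian self-dual code of length $n$ is near-extremal if its minimum (nonzero) weight equals $2\lfloor n/6\rfloor$; for length $6m$ this is $2m$. *)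

From HB Require Import structures.
From mathcomp Require Import all_boot all_order all_algebra all_field.
Set Implicit Arguments. Unset Strict Implicit. Unset Printing Implicit Defensive.
Import GRing.Theory.
Local Open Scope ring_scope.

(* F plays the role of F_4: an arbitrary finite field with 4 elements
   (unique up to isomorphism).  Vectors of length n are row vectors 'rV[F]_n. *)

Definition wt (F : finFieldType) (n : nat) (x : 'rV[F]_n) : nat :=
  #|[set i : 'I_n | x 0 i != 0]|.

Definition herm (F : finFieldType) (n : nat) (x y : 'rV[F]_n) : F :=
  \sum_(k < n) x 0 k * (y 0 k) ^+ 2.

Definition herm_self_dual (F : finFieldType) (n : nat) (D : {vspace 'rV[F]_n}) : Prop :=
  forall x : 'rV[F]_n, x \in D <-> (forall y : 'rV[F]_n, y \in D -> herm x y = 0).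

Definition min_weight_eq (F : finFieldType) (n : nat) (D : {vspace 'rV[F]_n}) (d : nat) : Prop :=
  (exists2 x : 'rV[F]_n, (x \in D) && (x != 0) & wt x = d) /\
  (forall x : 'rV[F]_n, x \in D -> x != 0 -> (d <= wt x)%N).

Definition near_extremal (F : finFieldType) (n : nat) (D : {vspace 'rV[F]_n}) : Prop :=
  min_weight_eq D (2 * (n %/ 6)).

Definition num_weight (F : finFieldType) (n : nat) (D : {vspace 'rV[F]_n}) (w : nat) : nat :=
  #|[set x : 'rV[F]_n | (x \in D) && (wt x == w)]|.

From HB Require Import structures.
From mathcomp Require Import all_boot all_order all_algebra all_field.
From mathcomp Require Import zify.
Set Implicit Arguments. Unset Strict Implicit. Unset Printing Implicit Defensive.
Import GRing.Theory Num.Theory.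

(* A_(2m) is three times a_k, the number of minimum-weight codewords that are
   nonzero at coordinate k, as soon as a_k does not depend on k (double
   counting gives 6m a = 2m A_(2m)); and a_k is a multiple of 3, since the three
   nonzero scalars act freely on these codewords.

   To compare a_i and a_j, let D(S) be the subcode supported in S.
   Self-duality gives |D(S)| |D| = 4^|S| |D(~S)|.  With U the other n - 2
   coordinates, summing |D(S u {i})| - |D(S u {j})| over the s-subsets S of U
   yields the coefficient of X^(s+1) in
     H = sum_(x in D) ([x_i <> 0] - [x_j <> 0]) X^wt(x) (1 + X)^(n - 1 - wt(x)),
   and the identity becomes H_r |D| = - 4^r H_(n - r).  Weights in D are even
   (<x, x>_H = wt x since a^3 = 1 for a <> 0) and at least 2m, so
   H = X^(2m) (1 + X) Q with Q a combination of (X^2)^k ((1 + X)^2)^(2m-1-k).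
   The functional equation kills the coefficients of H beyond X^(4m), so
   deg Q < 2m, which forces Q = Q(0) (1 + 2X)^(2m-1); comparing H_(4m) with
   H_(2m) then gives Q(0) = 0, and Q(0) = a_i - a_j. *)

Lemma sum_nat_indicator (T : finType) (P Q : pred T) :
  (\sum_(t | P t) Q t)%N = #|[set t | P t && Q t]|.
Proof. by rewrite -sum1dep_card big_mkcondr /=; apply: eq_bigr => t _; case: (Q t). Qed.

Lemma setC_setU1 (T : finType) (a b : T) (S : {set T}) :
  a != b -> S \subset ~: [set a; b] -> ~: (a |: S) = b |: (~: [set a; b] :\: S).
Proof.
move=> neq_ab /subsetP SU; apply/setP => k; rewrite !inE.
have [->|neq_kb] := eqVneq k b; last by rewrite orbF negb_or andbC.
by rewrite eq_sym (negbTE neq_ab) /=; apply/negP => /SU; rewrite !inE eqxx orbT.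
Qed.

Lemma card_supersets (T : finType) (U B : {set T}) s : B \subset U -> (#|B| <= s)%N ->
  #|[set S : {set T} | [&& S \subset U, #|S| == s & B \subset S]]| =
    'C(#|U| - #|B|, s - #|B|).
Proof.
move=> BU Bs; rewrite -(cardsDS BU) -cards_draws.
have disjB (S : {set T}) : S \subset U :\: B -> [disjoint S & B].
  by rewrite subsetD => /andP[].
have setUDK (S : {set T}) : B \subset S -> (S :\: B) :|: B = S.
  by move=> BS; rewrite setUC setDE setUIr setUCr setIT; apply/setUidPr.
rewrite -(card_in_imset (f := fun S : {set T} => S :\: B)) => [|S1 S2]; last first.
  by rewrite !inE => /and3P[_ _ /setUDK e1] /and3P[_ _ /setUDK e2] e; rewrite -e1 -e2 e.
congr #|pred_of_set _|; apply/setP => S'; rewrite inE; apply/imsetP/andP.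
  move=> [S /[!inE] /and3P[SU /eqP <- BS] ->].
  by rewrite setSD // cardsDS.
move=> [S'UB /eqP cardS']; exists (S' :|: B); last first.
  by rewrite setDUl setDv setU0; apply/esym/setDidPl; apply: disjB.
rewrite inE subUset BU (subset_trans S'UB (subsetDl _ _)) subsetUr !andbT /=.
by rewrite cardsU (disjoint_setI0 (disjB _ S'UB)) cards0 subn0 cardS' subnK.
Qed.

Section SupersetCount.
Local Open Scope ring_scope.

Lemma coef_1addXn k i : ((1 + 'X : {poly int}) ^+ k)`_i = 'C(k, i)%:R.
Proof.
elim: k i => [|k IH] i; first by rewrite expr0 coefC; case: i.
rewrite exprS mulrDl mul1r coefD coefXM !IH; case: i => [|i] /=.
  by rewrite addr0 !bin0.
by rewrite binS natrD addrC.
Qed.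

Lemma card_supersets_coef (T : finType) (U B : {set T}) s : B \subset U ->
  #|[set S : {set T} | [&& S \subset U, #|S| == s & B \subset S]]|%:R =
    ('X^#|B| * (1 + 'X) ^+ (#|U| - #|B|) : {poly int})`_s.
Proof.
move=> BU; rewrite coefXnM coef_1addXn; case: ltnP => [ltsB|leBs].
  apply/eqP; rewrite pnatr_eq0 cards_eq0; apply/eqP/setP => S; rewrite !inE.
  by apply/and3P => -[_ /eqP cardS /subset_leq_card]; rewrite cardS leqNgt ltsB.
by rewrite card_supersets.
Qed.

End SupersetCount.

Section HomogeneousAB.
Local Open Scope ring_scope.

Definition polyT : {poly int} := 1 + 'X *+ 2.
Definition polyA : {poly int} := 'X^2.
Definition polyB : {poly int} := (1 + 'X) ^+ 2.

Lemma polyBE : polyB = polyA + polyT.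
Proof. by rewrite /polyB /polyA /polyT sqrrD expr1n mul1r addrC. Qed.

(* [homAB N p]: p is an integral combination of the A^k B^(N - k), k <= N,
   recorded in the basis T^(N - k) A^k (T = B - A), whose degrees N + k are
   pairwise distinct. *)
Fixpoint homAB (N : nat) (p : {poly int}) : Prop :=
  if N is N'.+1 then exists c q, homAB N' q /\ p = c *: polyT ^+ N + polyA * q
  else exists c : int, p = c%:P.

Lemma homAB0 N : homAB N 0.
Proof.
elim: N => [|N IH] /=; first by exists 0; rewrite polyC0.
by exists 0, 0; rewrite scale0r mulr0 addr0.
Qed.

Lemma homABD N p q : homAB N p -> homAB N q -> homAB N (p + q).
Proof.
elim: N p q => [|N IH] p q /=.
  by move=> [c ->] [d ->]; exists (c + d); rewrite polyCD.
move=> [c [p' [hp ->]]] [d [q' [hq ->]]].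
exists (c + d), (p' + q'); split; first exact: IH.
by rewrite scalerDl mulrDr addrACA.
Qed.

Lemma homABZ N a p : homAB N p -> homAB N (a *: p).
Proof.
elim: N p => [|N IH] p /=.
  by move=> [c ->]; exists (a * c); rewrite -mul_polyC polyCM.
move=> [c [p' [hp ->]]]; exists (a * c), (a *: p'); split; first exact: IH.
by rewrite scalerDr scalerA scalerAr.
Qed.

Lemma homAB_sum N (I : finType) (P : pred I) (p : I -> {poly int}) :
  (forall i, P i -> homAB N (p i)) -> homAB N (\sum_(i | P i) p i).
Proof.
move=> hp; elim/big_rec: _ => [|i q Pi hq]; first exact: homAB0.
by apply: homABD => //; apply: hp.
Qed.

Lemma homAB_A N p : homAB N p -> homAB N.+1 (polyA * p).
Proof. by move=> hp; exists 0, p; rewrite scale0r add0r. Qed.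

Lemma homAB_T N p : homAB N p -> homAB N.+1 (polyT * p).
Proof.
elim: N p => [|N IH] p /=.
  move=> [c ->]; exists c, 0; split; first exact: (homAB0 0).
  by rewrite mulr0 addr0 -mul_polyC mulrC.
move=> [c [p' [hp ->]]]; exists c, (polyT * p'); split; first exact: IH.
by rewrite mulrDr -scalerAr -exprS mulrCA.
Qed.

Lemma homAB_B N p : homAB N p -> homAB N.+1 (polyB * p).
Proof.
by move=> hp; rewrite polyBE mulrDl; apply: homABD; [apply: homAB_A|apply: homAB_T].
Qed.

Lemma homAB_AB N k : (k <= N)%N -> homAB N (polyA ^+ k * polyB ^+ (N - k)).
Proof.
elim: N k => [|N IH] k.
  by rewrite leqn0 => /eqP ->; exists 1; rewrite !expr0 mulr1.
rewrite leq_eqVlt => /orP [/eqP ->|]; last first.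
  by rewrite ltnS => lekN; rewrite subSn // exprS mulrCA; apply/homAB_B/IH.
rewrite subnn expr0 mulr1 exprS; apply: homAB_A.
by have := IH N (leqnn N); rewrite subnn expr0 mulr1.
Qed.

Lemma polyT_lin : polyT = 2%:P * 'X + 1.
Proof. by rewrite /polyT addrC mul_polyC scaler_nat. Qed.

Lemma size_polyTX N : size (polyT ^+ N) = N.+1.
Proof.
have sizeT : size polyT = 2 by rewrite polyT_lin -polyC1 size_MXaddC size_polyC oner_eq0 andbF.
have TN_neq0 : polyT ^+ N != 0 by rewrite expf_neq0 // -size_poly_eq0 sizeT.
by rewrite -(prednK ((etrans (size_poly_gt0 _) TN_neq0))) size_exp sizeT mul1n.
Qed.

Lemma coef0_polyTX N : (polyT ^+ N)`_0 = 1.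
Proof. by rewrite -horner_coef0 horner_exp polyT_lin !hornerE expr1n. Qed.

Lemma lead_coef_polyTX N : lead_coef (polyT ^+ N) = 2 ^+ N.
Proof.
rewrite lead_coef_exp polyT_lin lead_coefDl ?lead_coefMX ?lead_coefC //.
by rewrite size_polyC size_mulX ?polyC_eq0 // size_polyC.
Qed.

Lemma size_homAB N p : homAB N p -> (size p <= N.*2.+1)%N.
Proof.
elim: N p => [|N IH] p /=.
  by move=> [c ->]; rewrite size_polyC; case: (c != 0).
move=> [c [q [hq ->]]]; apply: (leq_trans (size_add _ _)); rewrite geq_max.
apply/andP; split.
  by apply: (leq_trans (size_scale_leq _ _)); rewrite size_polyTX; lia.
apply: (leq_trans (size_mul_leq _ _)); rewrite size_polyXn.
by rewrite !addSn add0n doubleS !ltnS; apply: IH.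
Qed.

Lemma homAB_low_degree N p : homAB N p -> (size p <= N.+1)%N -> p = p`_0 *: polyT ^+ N.
Proof.
elim: N p => [|N IH] p /=.
  by move=> [c ->] _; rewrite expr0 coefC alg_polyC.
move=> [c [q [hq ->]]] sp.
suff -> : q = 0 by rewrite mulr0 addr0 coefZ coef0_polyTX mulr1.
apply: contraTeq sp => q_neq0; rewrite -ltnNge.
have sAq : size (polyA * q) = (size q).+2.
  by rewrite size_mul ?size_polyXn // -size_poly_eq0 size_polyXn.
have [sq|ltNq] := leqP (size q) N.
  have qE := IH q hq (leqW sq).
  have q0_neq0 : q`_0 != 0 by apply: contraNneq q_neq0 => q0; rewrite qE q0 scale0r.
  by move: sq; rewrite qE size_scale // size_polyTX ltnn.
rewrite addrC size_addl; first by rewrite sAq.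
by rewrite sAq (leq_ltn_trans (size_scale_leq _ _)) // size_polyTX; lia.
Qed.

Lemma size_1addX : size (1 + 'X : {poly int}) = 2.
Proof. by rewrite addrC -polyC1 size_XaddC. Qed.

Lemma homAB_coef0_eq0 N Q (c d : int) : homAB N Q -> 0 < c -> 0 < d ->
  (forall r, (N.+1 < r <= N.*2.+1)%N -> ((1 + 'X) * Q)`_r = 0) ->
  ((1 + 'X) * Q)`_N.+1 * c = - (d * Q`_0) -> Q`_0 = 0.
Proof.
move=> hQ c_gt0 d_gt0 top_eq0 edge.
have [->|Q_neq0] := eqVneq Q 0; first by rewrite coef0.
have X1_neq0 : 1 + 'X != 0 :> {poly int} by rewrite -size_poly_eq0 size_1addX.
have sizeXQ : size ((1 + 'X) * Q) = (size Q).+1 by rewrite size_mul // size_1addX.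
have sQ : (size Q <= N.+1)%N.
  rewrite -ltnS -sizeXQ; apply/leq_sizeP => r lt_Nr.
  have [le_r|lt_r] := leqP r N.*2.+1; first by apply: top_eq0; rewrite lt_Nr.
  apply: (leq_sizeP _ _ _ _ lt_r) => //.
  by rewrite sizeXQ ltnS; apply: size_homAB.
have top : ((1 + 'X) * polyT ^+ N)`_N.+1 = 2 ^+ N.
  have TN_neq0 : polyT ^+ N != 0 by rewrite -size_poly_eq0 size_polyTX.
  have lead1X : lead_coef (1 + 'X : {poly int}) = 1.
    by rewrite addrC -polyC1 lead_coefXaddC.
  have := lead_coefM (1 + 'X) (polyT ^+ N).
  by rewrite lead1X lead_coef_polyTX mul1r lead_coefE size_mul // size_1addX size_polyTX.
move: edge; rewrite {1}(homAB_low_degree hQ sQ) -scalerAr coefZ top -mulrA [d * _]mulrC.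
move/eqP; rewrite -subr_eq0 opprK -mulrDr mulf_eq0 => /orP[/eqP //|].
by rewrite (negbTE (lt0r_neq0 _)) // addr_gt0 // mulr_gt0 // exprn_gt0.
Qed.

End HomogeneousAB.

Section Supports.
Variable F : finFieldType.
Local Open Scope ring_scope.

Definition supp n (x : 'rV[F]_n) : {set 'I_n} := [set k | x 0 k != 0].

Definition subcode n (D : {vspace 'rV[F]_n}) (S : {set 'I_n}) : {set 'rV[F]_n} :=
  [set x | (x \in D) && (supp x \subset S)].

Lemma card_subcode_sum n (D : {vspace 'rV[F]_n}) S :
  #|subcode D S| = (\sum_(x in D) (supp x \subset S))%N.
Proof. by rewrite sum_nat_indicator; apply: eq_card => x; rewrite !inE. Qed.

Lemma card_rowspace m n (A : 'M[F]_(m, n)) :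
  #|[set x : 'rV[F]_n | (x <= A)%MS]| = (#|F| ^ \rank A)%N.
Proof.
have -> : [set x : 'rV[F]_n | (x <= A)%MS] = (mulmxr (row_base A)) @: setT.
  apply/setP => x; rewrite inE -(eq_row_base A); apply/idP/imsetP.
    by move=> /submxP[u ->]; exists u; rewrite ?inE.
  by move=> [u _ ->]; rewrite submxMl.
rewrite card_imset; last exact: row_free_inj (row_base_free A).
by rewrite cardsT card_mx mul1n.
Qed.

Lemma card_kermx m n (A : 'M[F]_(m, n)) :
  #|[set y : 'rV[F]_m | y *m A == 0]| = (#|F| ^ (m - \rank A))%N.
Proof. by rewrite -mxrank_ker -card_rowspace; apply: eq_card => y; rewrite !inE sub_kermx. Qed.

Lemma card_supp_sub n (S : {set 'I_n}) :
  #|[set x : 'rV[F]_n | supp x \subset S]| = (#|F| ^ #|S|)%N.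
Proof.
pose toRow (f : {ffun 'I_n -> F}) : 'rV[F]_n := \row_k f k.
have toRow_inj : injective toRow.
  by move=> f g /rowP e; apply/ffunP => k; have := e k; rewrite !mxE.
have -> : [set x : 'rV[F]_n | supp x \subset S] = toRow @: pffun_on 0 S F.
  apply/setP => x; rewrite inE; apply/idP/imsetP.
    move=> /subsetP xS; exists [ffun k => x 0 k]; last by apply/rowP => k; rewrite !mxE ffunE.
    apply/pffun_onP; split => //; apply/subsetP => k.
    by rewrite inE ffunE => nz; apply: xS; rewrite inE.
  move=> [f /pffun_onP[/subsetP fS _] ->]; apply/subsetP => k.
  by rewrite inE mxE => nz; apply: fS; rewrite inE.
by rewrite card_imset // card_pffun_on.
Qed.

Definition diag_set_mx n (S : {set 'I_n}) : 'M[F]_n := diag_mx (\row_k (k \in S)%:R).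

Lemma submx_diag_set n (S : {set 'I_n}) (x : 'rV[F]_n) :
  (x <= diag_set_mx S)%MS = (supp x \subset S).
Proof.
apply/idP/subsetP => [/submxP[u ->] k|xS].
  by rewrite inE mul_mx_diag !mxE; case: (k \in S); rewrite ?mulr0 ?eqxx.
apply/submxP; exists x; apply/rowP => k; rewrite mul_mx_diag !mxE.
have [//|kS] := boolP (k \in S); first by rewrite mulr1.
by rewrite mulr0; apply/eqP; apply: contraNT kS => nz; apply: xS; rewrite inE.
Qed.

Lemma rank_diag_set n (S : {set 'I_n}) : \rank (diag_set_mx S) = #|S|.
Proof.
have q_gt1 : (1 < #|F|)%N by rewrite (cardD1 0) (cardD1 1) !inE oner_neq0.
apply: (expnI q_gt1); rewrite -card_rowspace -card_supp_sub.
by apply: eq_card => x; rewrite !inE submx_diag_set.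
Qed.

Lemma mul_tr_diag_set_eq0 n (S : {set 'I_n}) (y : 'rV[F]_n) :
  (y *m (diag_set_mx S)^T == 0) = (supp y \subset ~: S).
Proof.
rewrite tr_diag_mx mul_mx_diag; apply/eqP/subsetP => [/rowP yS0 k|yS].
  rewrite !inE => nz; apply/negP => kS.
  by have := yS0 k; rewrite !mxE kS mulr1 => /eqP; rewrite (negbTE nz).
apply/rowP => k; rewrite !mxE; have [kS|] := boolP (k \in S); last by rewrite mulr0.
have [->|nz] := eqVneq (y 0 k) 0; first by rewrite mul0r.
by have := yS k; rewrite !inE nz kS => /(_ isT).
Qed.

End Supports.

Arguments diag_set_mx {F n} S.

Definition num_weight_nz (F : finFieldType) n (D : {vspace 'rV[F]_n}) w (k : 'I_n) : nat :=
  #|[set x : 'rV[F]_n | [&& x \in D, wt x == w & x 0%R k != 0%R]]|.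

Section WeightCounting.
Variables (F : finFieldType) (n : nat) (D : {vspace 'rV[F]_n}) (w : nat).
Local Open Scope ring_scope.

Lemma sum_num_weight_nz : (\sum_(k < n) num_weight_nz D w k = w * num_weight D w)%N.
Proof.
have nzE k : num_weight_nz D w k = (\sum_(x | (x \in D) && (wt x == w)) (x 0%R k != 0%R))%N.
  by rewrite sum_nat_indicator; apply: eq_card => x; rewrite !inE andbA.
under eq_bigr do rewrite nzE.
rewrite exchange_big (eq_bigr (fun _ => w)) => [|x /andP[_ /eqP <-]]; last first.
  by rewrite sum_nat_indicator; apply: eq_card => k; rewrite !inE.
by rewrite sum_nat_cond_const mulnC.
Qed.

Lemma wtZ (c : F) (x : 'rV[F]_n) : c != 0 -> wt (c *: x) = wt x.
Proof. by move=> c_neq0; apply: eq_card => k; rewrite !inE mxE mulf_eq0 negb_or c_neq0. Qed.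

Lemma num_weight_nzE k : num_weight_nz D w k =
  (#|F|.-1 * #|[set x : 'rV[F]_n | [&& x \in D, wt x == w & x 0%R k == 1%R]]|)%N.
Proof.
set D1 := [set x | _].
have -> : num_weight_nz D w k = #|(fun p : F * 'rV[F]_n => p.1 *: p.2) @: setX [set~ 0] D1|.
  congr #|pred_of_set _|; apply/setP => y; rewrite inE; apply/idP/imsetP.
    move=> /and3P[yD wy yk]; exists (y 0 k, (y 0 k)^-1 *: y).
      by rewrite !inE /= yk memvZ // wtZ ?invr_eq0 // wy mxE mulVf ?eqxx.
    by rewrite /= scalerA divff // scale1r.
  move=> [[c x]] /[!inE] /andP[/= c_neq0 /and3P[xD wx /eqP xk]] ->.
  by rewrite memvZ // wtZ // wx mxE xk mulr1.
rewrite card_in_imset ?cardsX ?cardsC1 ?card_ord //.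
move=> [c x] [c' x'] /[!inE] /andP[/= _ /and3P[_ _ /eqP xk]].
move=> /andP[/= c'_neq0 /and3P[_ _ /eqP x'k]] /= e.
have ecc' : c = c' by have := congr1 (fun v : 'rV[F]_n => v 0 k) e; rewrite !mxE xk x'k !mulr1.
by move: e; rewrite ecc' => /(scalerI c'_neq0) ->.
Qed.

End WeightCounting.

Section HermitianSelfDual.
Variable F : finFieldType.
Hypothesis F4 : #|F| = 4%N.
Variables (n : nat) (D : {vspace 'rV[F]_n}).
Hypothesis sdD : herm_self_dual D.
Local Open Scope ring_scope.

Lemma pchar2_F4 : (2 \in [pchar F])%N.
Proof. exact: (@card_finPcharP F 2 2). Qed.

Local Notation frob := (pFrobenius_aut pchar2_F4).

Lemma expr4_F4 (a : F) : a ^+ 4 = a.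
Proof. by have := expf_card a; rewrite F4. Qed.

Lemma frobK : involutive frob.
Proof. by move=> a; rewrite !pFrobenius_autE -exprM expr4_F4. Qed.

Definition conjv (x : 'rV[F]_n) : 'rV[F]_n := map_mx frob x.

Lemma conjvK : involutive conjv.
Proof. by move=> x; apply/rowP => k; rewrite !mxE frobK. Qed.

Lemma supp_conjv (x : 'rV[F]_n) : supp (conjv x) = supp x.
Proof. by apply/setP => k; rewrite !inE mxE pFrobenius_autE expf_eq0. Qed.

Lemma herm_xx (x : 'rV[F]_n) : herm x x = (wt x)%:R.
Proof.
rewrite /herm /wt -sum1_card natr_sum (bigID (fun k => x 0 k != 0)) /=.
rewrite [X in _ + X]big1 ?addr0 => [|k /negPn/eqP ->]; last by rewrite mul0r.
apply: eq_big => [k|k nz]; first by rewrite inE.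
by apply: (mulfI nz); rewrite mulr1 -!exprS expr4_F4.
Qed.

Lemma even_wt (x : 'rV[F]_n) : x \in D -> ~~ odd (wt x).
Proof.
move=> xD; have xx0 : herm x x = 0 by apply/(proj1 (sdD x)).
by rewrite -dvdn2 (dvdn_pcharf pchar2_F4) -herm_xx xx0.
Qed.

(* Conjugating the codewords turns the Hermitian form into a bilinear one. *)
Definition code_mx : 'M[F]_(#|D|, n) := \matrix_(i < #|D|) conjv (enum_val i).

Lemma memv_code_mx (y : 'rV[F]_n) : (y \in D) = (y *m (code_mx)^T == 0).
Proof.
have herm_code i : (y *m code_mx^T) 0 i = herm y (enum_val i).
  by rewrite /herm mxE; apply: eq_bigr => k _; rewrite !mxE.
apply/idP/eqP => [yD|/rowP y0].
  by apply/rowP => i; rewrite herm_code mxE; apply: (proj1 (sdD y)) => //; apply: enum_valP.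
apply/(proj2 (sdD y)) => u uD.
by rewrite -(enum_rankK_in (mem0v D) uD) -herm_code y0 mxE.
Qed.

Lemma submx_code_mx (x : 'rV[F]_n) : (x <= code_mx)%MS = (conjv x \in D).
Proof.
apply/idP/idP => [/submxP[u ->]|xD]; last first.
  rewrite -[x]conjvK -(enum_rankK_in (mem0v D) xD).
  by rewrite -(rowK (fun i => conjv (enum_val i))) row_sub.
rewrite /conjv map_mxM mulmx_sum_row; apply: memv_suml => i _; apply: memvZ.
by rewrite -map_row rowK -/(conjv _) conjvK enum_valP.
Qed.

Lemma card_code : #|D| = (4 ^ (n - \rank code_mx))%N.
Proof.
rewrite -F4 -mxrank_tr -card_kermx.
by apply: eq_card => y; rewrite inE memv_code_mx.
Qed.

Lemma card_subcode S : #|subcode D S| = (4 ^ \rank (code_mx :&: diag_set_mx S))%N.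
Proof.
rewrite -F4 -card_rowspace -(card_preimset _ (can_inj conjvK)).
by apply: eq_card => x; rewrite !inE sub_capmx submx_code_mx submx_diag_set supp_conjv conjvK.
Qed.

Lemma card_subcodeC S :
  #|subcode D (~: S)| = (4 ^ (n - \rank (col_mx code_mx (diag_set_mx S))))%N.
Proof.
rewrite -F4 -mxrank_tr -card_kermx; apply: eq_card => y.
by rewrite !inE memv_code_mx tr_col_mx mul_mx_row row_mx_eq0 mul_tr_diag_set_eq0.
Qed.

Lemma card_subcode_dual S :
  (#|subcode D S| * #|D| = 4 ^ #|S| * #|subcode D (~: S)|)%N.
Proof.
rewrite card_code card_subcode card_subcodeC -!expnD; congr (_ ^ _)%N.
have := mxrank_sum_cap code_mx (diag_set_mx S).
have := rank_leq_col (col_mx code_mx (diag_set_mx S)).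
have := rank_leq_col code_mx.
rewrite addsmxE rank_diag_set.
move: (\rank code_mx) (\rank (col_mx _ _)) (\rank (_ :&: _)) => r c k; lia.
Qed.

End HermitianSelfDual.

Section DifferenceEnumerator.
Variable F : finFieldType.
Hypothesis F4 : #|F| = 4%N.
Variables (n : nat) (D : {vspace 'rV[F]_n}).
Hypothesis sdD : herm_self_dual D.
Variables i j : 'I_n.
Hypothesis neq_ij : i != j.
Local Notation U := (~: [set i; j]).
Local Open Scope ring_scope.

Lemma notin_U (S : {set 'I_n}) : S \subset U -> (i \notin S) && (j \notin S).
Proof.
by move=> /subsetP SU; apply/andP; split; apply/negP => /SU; rewrite !inE eqxx ?orbT.
Qed.

Lemma card_U : #|U| = (n - 2)%N.
Proof. by rewrite cardsCs setCK cards2 neq_ij card_ord. Qed.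

Definition subcode_diff (S : {set 'I_n}) : int :=
  #|subcode D (i |: S)|%:R - #|subcode D (j |: S)|%:R.

Lemma subcode_diff_dual (S : {set 'I_n}) : S \subset U ->
  subcode_diff S * #|D|%:R = - (4 ^+ #|S|.+1 * subcode_diff (U :\: S)).
Proof.
move=> SU; have /andP[iS jS] := notin_U SU.
have di := card_subcode_dual F4 sdD (i |: S).
have dj := card_subcode_dual F4 sdD (j |: S).
have SU' : S \subset ~: [set j; i] by rewrite setUC.
rewrite (setC_setU1 neq_ij SU) cardsU1 iS add1n in di.
rewrite (setC_setU1 _ SU') 1?eq_sym // cardsU1 jS add1n (setUC [set j] [set i]) in dj.
by rewrite /subcode_diff mulrBl -!natrM di dj !natrM !natrX mulrBr opprB addrC.
Qed.

Definition weight_term w : {poly int} := 'X^w * (1 + 'X) ^+ (n.-1 - w).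

Definition covers (a : 'I_n) s (x : 'rV[F]_n) : nat :=
  #|[set S : {set 'I_n} | (S \subset U) && (#|S| == s) && (supp x \subset a |: S)]|.

Lemma coversE a s x :
  covers a s x = #|[set S : {set 'I_n} | [&& S \subset U, #|S| == s & supp x :\ a \subset S]]|.
Proof. by apply: eq_card => S; rewrite !inE subDset andbA. Qed.

Lemma covers_eq0 a b s x : b != a -> b \notin U -> b \in supp x -> covers a s x = 0%N.
Proof.
move=> neq_ba bU bx; rewrite coversE; apply: eq_card0 => S; rewrite !inE.
apply/and3P => -[/subsetP SU _ /subsetP xS].
by apply: (negP bU); apply/SU/xS; rewrite in_setD1 neq_ba.
Qed.

Lemma covers_coef a b s x : [set a; b] = [set i; j] -> a \in supp x -> b \notin supp x ->
  (covers a s x)%:R = (weight_term (wt x))`_s.+1.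
Proof.
move=> ab ax bx; have xU : supp x :\ a \subset U.
  apply/subsetP => k; rewrite -ab !inE negb_or => /andP[-> kx].
  by apply: contraNneq bx => <-; rewrite inE.
have wx : wt x = (#|supp x :\ a|).+1 by rewrite [wt x](cardsD1 a) ax.
rewrite coversE card_supersets_coef // card_U /weight_term wx exprS -mulrA coefXM /=.
suff -> : (n - 2 - #|supp x :\ a| = n.-1 - #|supp x :\ a|.+1)%N by [].
lia.
Qed.

Definition supp_diff (x : 'rV[F]_n) : int := (i \in supp x)%:R - (j \in supp x)%:R.

Lemma covers_diff s x :
  (covers i s x)%:R - (covers j s x)%:R =
    supp_diff x * (weight_term (wt x))`_s.+1.
Proof.
have iU : i \notin U by rewrite !inE eqxx.
have jU : j \notin U by rewrite !inE eqxx orbT.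
have neq_ji : j != i by rewrite eq_sym.
rewrite /supp_diff; case: (boolP (i \in supp x)) => ix; case: (boolP (j \in supp x)) => jx.
- by rewrite (covers_eq0 s neq_ji jU jx) (covers_eq0 s neq_ij iU ix) subrr mul0r.
- by rewrite (covers_eq0 s neq_ij iU ix) (covers_coef s (erefl _) ix jx) subr0 mul1r.
- by rewrite (covers_eq0 s neq_ji jU jx) (covers_coef s (setUC _ _) jx ix) sub0r mulN1r.
- have suppD1 a : a \notin supp x -> supp x :\ a = supp x.
    by move=> ax; apply/setDidPl; rewrite disjoint_sym disjoints1.
  by rewrite !coversE !suppD1 // subrr mul0r.
Qed.

Lemma sum_covers a s :
  (\sum_(x in D) covers a s x =
     \sum_(S : {set 'I_n} | (S \subset U) && (#|S| == s)) #|subcode D (a |: S)|)%N.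
Proof.
under eq_bigr do rewrite /covers -sum_nat_indicator.
by rewrite exchange_big; apply: eq_bigr => S _; rewrite card_subcode_sum.
Qed.

Definition diff_wenum : {poly int} := \sum_(x in D) supp_diff x *: weight_term (wt x).

Lemma coef_diff_wenum s :
  diff_wenum`_s.+1 = \sum_(S : {set 'I_n} | (S \subset U) && (#|S| == s)) subcode_diff S.
Proof.
rewrite coef_sum; under eq_bigr do rewrite coefZ -covers_diff.
by rewrite /subcode_diff !sumrB -!natr_sum !sum_covers.
Qed.

Lemma diff_wenum_dual r : (0 < r < n)%N ->
  diff_wenum`_r * #|D|%:R = - (4 ^+ r * diff_wenum`_(n - r)).
Proof.
case: r => [//|s] /andP[_ lt_sn].
have -> : (n - s.+1 = (n - 2 - s).+1)%N by lia.
rewrite !coef_diff_wenum mulr_suml.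
rewrite (eq_bigr (fun S => - (4 ^+ s.+1 * subcode_diff (U :\: S)))); last first.
  by move=> S /andP[SU /eqP <-]; apply: subcode_diff_dual.
rewrite sumrN -mulr_sumr; congr (- (_ * _)).
rewrite [RHS](reindex_onto (fun S => U :\: S) (fun S => U :\: S)) /=; last first.
  by move=> S /andP[SU _]; rewrite setDDr setDv set0U; apply/setIidPr.
apply: eq_bigl => S; rewrite setDDr setDv set0U subsetDl /=.
have [SU|notSU] := boolP (S \subset U); last first.
  by apply/esym/negbTE; apply: contra notSU => /andP[_ /eqP <-]; apply: subsetIl.
rewrite (setIidPr SU) eqxx andbT cardsDS // card_U.
have := subset_leq_card SU; rewrite card_U => leSU.
apply/eqP/eqP => [-> //|e]; rewrite -(subKn leSU) e subKn //; lia.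
Qed.

End DifferenceEnumerator.

Section NearExtremal.
Local Open Scope ring_scope.
Variable F : finFieldType.
Hypothesis F4 : #|F| = 4%N.
Variables (m : nat) (D : {vspace 'rV[F]_(6 * m)}).
Hypothesis sdD : herm_self_dual D.
Hypothesis m_gt0 : (0 < m)%N.
Hypothesis minD : forall x, x \in D -> x != 0 -> (2 * m <= wt x)%N.
Variables i j : 'I_(6 * m).
Hypothesis neq_ij : i != j.
Local Notation n := (6 * m)%N.
Local Notation supp_diff := (supp_diff i j).

Definition half_excess (x : 'rV[F]_n) : nat := ((wt x)./2 - m)%N.

Lemma wt_supp_diff_neq0 x : x \in D -> supp_diff x != 0 ->
  wt x = (m.*2 + (half_excess x).*2)%N /\ (half_excess x <= m.*2.-1)%N.
Proof.
move=> xD diff_neq0.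
have x_neq0 : x != 0.
  apply: contraNneq diff_neq0 => ->; rewrite /supp_diff.
  by rewrite !inE !mxE eqxx subrr.
have lt_wn : (wt x < n)%N.
  rewrite /wt -[X in (_ < X)%N]card_ord -cardsT; apply: proper_card.
  rewrite properT; apply: contraNneq diff_neq0 => suppT.
  by rewrite /supp_diff /supp suppT !inE subrr.
have := minD xD x_neq0; have := halfK (wt x); rewrite (negbTE (even_wt F4 sdD xD)).
rewrite /half_excess; move: (wt x) lt_wn => w; rewrite -!muln2; lia.
Qed.

Definition quot_wenum : {poly int} :=
  \sum_(x in D) supp_diff x *: (polyA ^+ half_excess x * polyB ^+ (m.*2.-1 - half_excess x)).

Lemma homAB_quot_wenum : homAB m.*2.-1 quot_wenum.
Proof.
apply: homAB_sum => x xD; have [->|diff_neq0] := eqVneq (supp_diff x) 0.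
  by rewrite scale0r; apply: homAB0.
by apply/homABZ/homAB_AB; case: (wt_supp_diff_neq0 xD diff_neq0).
Qed.

Lemma diff_wenumE : diff_wenum D i j = 'X^(m.*2) * ((1 + 'X) * quot_wenum).
Proof.
rewrite /quot_wenum !mulr_sumr; apply: eq_bigr => x xD.
have [->|diff_neq0] := eqVneq (supp_diff x) 0; first by rewrite !scale0r !mulr0.
have [wtE le_h] := wt_supp_diff_neq0 xD diff_neq0.
rewrite -!scalerAr /weight_term /polyA /polyB -!exprM wtE exprD -!mulrA; congr (_ *: (_ * _)).
have -> : (n.-1 - (m.*2 + (half_excess x).*2) = (2 * (m.*2.-1 - half_excess x)).+1)%N.
  by rewrite -!muln2; lia.
by rewrite exprS mulrCA -mul2n.
Qed.

Lemma quot_wenum_coef0_eq0 : quot_wenum`_0 = 0.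
Proof.
have coefH k : (diff_wenum D i j)`_(k + m.*2) = ((1 + 'X) * quot_wenum)`_k.
  by rewrite diff_wenumE coefXnM ltnNge leq_addl addnK.
have coefH_lt k : (k < m.*2)%N -> (diff_wenum D i j)`_k = 0.
  by rewrite diff_wenumE coefXnM => ->.
have D_gt0 : 0 < #|D|%:R :> int by rewrite ltr0n; apply/card_gt0P; exists 0; apply: mem0v.
have N1 : (m.*2.-1).+1 = m.*2 by rewrite prednK // double_gt0.
apply: (homAB_coef0_eq0 homAB_quot_wenum D_gt0 (exprn_gt0 (4 * m) (ltr0n _ 4))).
  move=> r; rewrite N1 => /andP[lt_mr le_rm].
  have r_range : (0 < r + m.*2 < n)%N by lia.
  have dual_small : (n - (r + m.*2) < m.*2)%N by lia.
  have := diff_wenum_dual F4 sdD neq_ij r_range.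
  rewrite (coefH_lt _ dual_small) mulr0 oppr0 coefH => /eqP.
  by rewrite mulf_eq0 (negbTE (lt0r_neq0 D_gt0)) orbF => /eqP.
have edge_range : (0 < m.*2 + m.*2 < n)%N by lia.
have -> : (4 * m = m.*2 + m.*2)%N by lia.
have := diff_wenum_dual F4 sdD neq_ij edge_range.
have -> : (n - (m.*2 + m.*2) = 0 + m.*2)%N by lia.
by rewrite N1 !coefH coef0M coefD coef1 coefX addr0 mul1r.
Qed.

Lemma coef0_quot_wenum :
  quot_wenum`_0 = (num_weight_nz D (2 * m)%N i)%:R - (num_weight_nz D (2 * m)%N j)%:R.
Proof.
have term x : x \in D ->
    (supp_diff x *: (polyA ^+ half_excess x * polyB ^+ (m.*2.-1 - half_excess x)))`_0 =
    ((wt x == (2 * m)%N) && (x 0 i != 0))%:R - ((wt x == (2 * m)%N) && (x 0 j != 0))%:R.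
  move=> xD; rewrite coefZ -horner_coef0 hornerM !horner_exp hornerD hornerX hornerC addr0.
  rewrite !expr1n mulr1 -exprM expr0n.
  have -> : supp_diff x * (2 * half_excess x == 0)%:R = supp_diff x * (wt x == (2 * m)%N)%:R.
    have [->|/(wt_supp_diff_neq0 xD)[-> _]] := eqVneq (supp_diff x) 0; first by rewrite !mul0r.
    by congr (_ * (_ : bool)%:R); apply/eqP/eqP; lia.
  by rewrite /supp_diff !inE; case: (wt x == _); rewrite ?mulr1 ?mulr0 ?subrr.
rewrite coef_sum (eq_bigr _ term) sumrB -!natr_sum !sum_nat_indicator.
by congr (#|_|%:R - #|_|%:R); apply/setP => x; rewrite !inE.
Qed.

Lemma num_weight_nz_eq : num_weight_nz D (2 * m)%N i = num_weight_nz D (2 * m)%N j.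
Proof.
by apply/eqP; rewrite -(eqr_nat int) -subr_eq0 -coef0_quot_wenum quot_wenum_coef0_eq0.
Qed.

End NearExtremal.

Theorem lemma3p4 (F : finFieldType) (m : nat) (D : {vspace 'rV[F]_(6 * m)}) :
  #|F| = 4 -> (0 < m)%N -> herm_self_dual D -> near_extremal D ->
  num_weight D (2 * m) = 0 %[mod 9].
Proof.
move=> F4 m_gt0 sdD [_]; rewrite mulKn // => minD.
have n_gt0 : (0 < 6 * m)%N by rewrite muln_gt0.
pose k0 : 'I_(6 * m) := Ordinal n_gt0.
have nz_const k : num_weight_nz D (2 * m) k = num_weight_nz D (2 * m) k0.
  have [-> //|neq_kk0] := eqVneq k k0.
  exact: (num_weight_nz_eq F4 sdD m_gt0 minD neq_kk0).
have := sum_num_weight_nz D (2 * m).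
rewrite (eq_bigr _ (fun k _ => nz_const k)) sum_nat_const card_ord num_weight_nzE F4.
move: (#|_|) (num_weight D _) => b A e.
have : (2 * m * A = 2 * m * (9 * b))%N by lia.
by move/eqP; rewrite eqn_pmul2l ?muln_gt0 // => /eqP ->; rewrite modnMr.
Qed.
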